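(* Consider a recurrent network of $N$ units partitioned into $C$ cell types, with recurrent weight matrix $W$, a scalar $\mu$, and, at each time $t=1,2,\dots$, given eligibility traces $e_{pq,t}$, learning signals $L_{j,t}=\frac{\partial E}{\partial z_{j,t}}$ and activation derivatives $h_{j,t}$. The ModProp update $$\Delta W_{pq}\big|_t=L_{p,t}\,e_{pq,t}+\sum_{\alpha\in C}\Big(\sum_{j\in\alpha}L_{j,t}h_{j,t}\Big)\sum_{s=1}^{t}(W^s)_{\alpha\beta}\,\mu^{s-1}\,e_{pq,t-s}\qquad(p\in\beta)$$ admits an online (causal, computed in real time as $t$ advances) in-silico implementation, computing $\Delta W_{pq}|_t$ for all $p,q$ at every time step, with $O(CN^2)$ storage and $O(C^2N^2)$ computational complexity per time step.
   Context: For cell types $\alpha,\beta$, $N_\alpha$ is the number of units of type $\alpha$, $W_{\alpha\beta}=\mathbb{E}_{j\in\alpha,p\in\beta}[W_{jp}]$ is the average of the recurrent weights from type-$\beta$ units to type-$\alpha$ units, $(W^1)_{\alpha\beta}=W_{\alpha\beta}$, and $(W^{s+1})_{\alpha\beta}=\sum_{\gamma\in C}N_\gamma (W^1)_{\alpha\gamma}(W^s)_{\gamma\beta}$ (the type-level entries of the $(s+1)$-th power of the matrix whose $(i,j)$ entry is $W_{\alpha\beta}$ for $i\in\alpha,j\in\beta$). The implementation need not be biologically plausible. *)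

From HB Require Import structures.
From mathcomp Require Import all_boot all_order all_algebra.
From mathcomp Require Import reals.
Set Implicit Arguments. Unset Strict Implicit. Unset Printing Implicit Defensive.
Import Order.TTheory GRing.Theory Num.Theory.
Local Open Scope ring_scope.

Section ModProp.
Variables (R : realType) (N C : nat).
Variable ty : 'I_N -> 'I_C.
Variable W : 'M[R]_N.             (* W j p : weight from unit p to unit j *)
Variable mu : R.

Definition Ntype (a : 'I_C) : R := #|[set j | ty j == a]|%:R.

(* type-averaged weight W_{alpha beta} = E_{j in alpha, p in beta} W_{jp} *)
Definition Wavg (a b : 'I_C) : R :=
  (\sum_(j | ty j == a) \sum_(p | ty p == b) W j p) / (Ntype a * Ntype b).

(* Wpow k a b = (W^{k+1})_{alpha beta} *)
Fixpoint Wpow (k : nat) (a b : 'I_C) : R :=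
  match k with
  | 0 => Wavg a b
  | k'.+1 => \sum_(g < C) Ntype g * Wavg a g * Wpow k' g b
  end.

Variables (e : nat -> 'I_N -> 'I_N -> R) (L h : nat -> 'I_N -> R).

Definition modprop (t : nat) (p q : 'I_N) : R :=
  L t p * e t p q +
  \sum_(a < C) (\sum_(j | ty j == a) L t j * h t j) *
     \sum_(1 <= s < t.+1) Wpow s.-1 a (ty p) * mu ^+ s.-1 * e (t - s)%N p q.

End ModProp.

(* ---------- A model of online (in-silico) computation ----------
   Memory: m real registers (this is the storage).  At every time step the
   same straight-line program is executed on the memory; it may read the
   current inputs e_t, L_t, h_t and do arithmetic.  Cost per time step =
   number of instructions. Registers persist from one step to the next. *)
Inductive instr (R : Type) (N m : nat) :=
| ILoadE of 'I_N & 'I_N & 'I_m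
| ILoadL of 'I_N & 'I_m
| ILoadH of 'I_N & 'I_m
| IConst of R & 'I_m
| IAdd of 'I_m & 'I_m & 'I_m
| IMul of 'I_m & 'I_m & 'I_m.

Section Exec.
Variables (R : realType) (N m : nat).

Definition upd (s : 'I_m -> R) (r : 'I_m) (v : R) : 'I_m -> R :=
  fun k => if k == r then v else s k.

Definition exec_instr (E : 'I_N -> 'I_N -> R) (Lv hv : 'I_N -> R)
  (s : 'I_m -> R) (i : instr R N m) : 'I_m -> R :=
  match i with
  | ILoadE p q r => upd s r (E p q)
  | ILoadL j r => upd s r (Lv j)
  | ILoadH j r => upd s r (hv j)
  | IConst c r => upd s r c
  | IAdd a b r => upd s r (s a + s b)
  | IMul a b r => upd s r (s a * s b)
  end.

Definition exec_step (prog : seq (instr R N m)) (E : 'I_N -> 'I_N -> R)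
  (Lv hv : 'I_N -> R) (s : 'I_m -> R) : 'I_m -> R :=
  foldl (exec_instr E Lv hv) s prog.

(* memory after processing time steps 0, 1, ..., t (causal by construction) *)
Fixpoint run (prog : seq (instr R N m)) (s0 : 'I_m -> R)
  (e : nat -> 'I_N -> 'I_N -> R) (L h : nat -> 'I_N -> R) (t : nat)
  : 'I_m -> R :=
  match t with
  | 0 => exec_step prog (e 0) (L 0) (h 0) s0
  | t'.+1 => exec_step prog (e t) (L t) (h t) (run prog s0 e L h t')
  end.
End Exec.

(* The inner sum of the ModProp update is the filtered trace
   M_{a,pq,t} = sum_{s=1}^t (W^s)_{a,ty p} mu^(s-1) e_{pq,t-s}, and the recursion
   (W^(s+1))_{ab} = sum_g N_g W_{ag} (W^s)_{gb} makes it causal: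
   M_{a,pq,t+1} = W_{a,ty p} e_{pq,t} + mu sum_g N_g W_{ag} M_{g,pq,t}, M_{.,0} = 0.
   So it suffices to keep the C N^2 numbers M_{a,pq} in memory.  One time step is then
   a fixed sequence of parallel assignments whose right-hand sides are sums of
   products: the update of M costs C+1 products per entry, and
   Delta W_{pq} = L_p e_{pq,t} + sum_a (sum_{j in a} L_j h_j) M_{a,pq,t} costs C+1.
   Each assignment compiles to straight-line code with three scratch registers. *)

From HB Require Import structures.
From mathcomp Require Import all_boot all_order all_algebra.
From mathcomp Require Import reals.
From mathcomp Require Import ring zify.
Set Implicit Arguments. Unset Strict Implicit. Unset Printing Implicit Defensive.
Import GRing.Theory Num.Theory.
Local Open Scope ring_scope.

Inductive atom (R : Type) (N n : nat) :=
| AReg of 'I_n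
| AE of 'I_N & 'I_N
| AL of 'I_N
| AH of 'I_N
| AConst of R.
Arguments AReg {R N n}. Arguments AE {R N n}. Arguments AL {R N n}.
Arguments AH {R N n}. Arguments AConst {R N n}.

Section Assignments.
Variables (R : realType) (N n : nat).
Variables (E : 'I_N -> 'I_N -> R) (Lv hv : 'I_N -> R).

Definition expr := seq (atom R N n * atom R N n).

Definition eval_atom (d : 'I_n -> R) (a : atom R N n) : R :=
  match a with
  | AReg r => d r
  | AE p q => E p q
  | AL j => Lv j
  | AH j => hv j
  | AConst c => c
  end.

Definition eval d (ex : expr) : R :=
  \sum_(uv <- ex) eval_atom d uv.1 * eval_atom d uv.2.

Definition reads_atom (a : atom R N n) (k : 'I_n) : bool :=
  if a is AReg r then r == k else false.

Definition reads (ex : expr) k : bool :=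
  has (fun uv => reads_atom uv.1 k || reads_atom uv.2 k) ex.

Definition assign d (a : 'I_n * expr) : 'I_n -> R := upd d a.1 (eval d a.2).

Definition exec_assigns d (asgs : seq ('I_n * expr)) := foldl assign d asgs.

Lemma eval_nil d : eval d [::] = 0.
Proof. exact: big_nil. Qed.

Lemma eval_cons d uv ex :
  eval d (uv :: ex) = eval_atom d uv.1 * eval_atom d uv.2 + eval d ex.
Proof. exact: big_cons. Qed.

Lemma eq_eval_atom d d' a : d =1 d' -> eval_atom d a = eval_atom d' a.
Proof. by case: a => //= r; apply. Qed.

Lemma eq_eval d d' ex : d =1 d' -> eval d ex = eval d' ex.
Proof. by move=> dd'; apply: eq_bigr => uv _; rewrite !(eq_eval_atom _ dd'). Qed.

Lemma eval_upd d k v ex : ~~ reads ex k -> eval (upd d k v) ex = eval d ex.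
Proof.
elim: ex => [|[u w] ex IH] /=; first by rewrite !eval_nil.
rewrite !eval_cons !negb_or -andbA => /and3P[nu nw /IH ->]; congr (_ * _ + _).
  by case: u nu => //= r /negbTE; rewrite /upd => ->.
by case: w nw => //= r /negbTE; rewrite /upd => ->.
Qed.

End Assignments.

Section ParallelAssignment.
Variables (R : realType) (N n : nat).
Variables (E : 'I_N -> 'I_N -> R) (Lv hv : 'I_N -> R).
Local Notation exec_assigns := (@exec_assigns R N n E Lv hv).

Lemma exec_assigns_cat d asgs1 asgs2 :
  exec_assigns d (asgs1 ++ asgs2) = exec_assigns (exec_assigns d asgs1) asgs2.
Proof. exact: foldl_cat. Qed.

Lemma exec_assigns_frame d (asgs : seq ('I_n * expr R N n)) k :
  k \notin [seq a.1 | a <- asgs] -> exec_assigns d asgs k = d k.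
Proof.
elim: asgs d => //= a asgs IH d; rewrite inE negb_or => /andP[ka /IH ->].
by rewrite /assign /upd (negbTE ka).
Qed.

Lemma eq_exec_assigns d d' (asgs : seq ('I_n * expr R N n)) :
  d =1 d' -> exec_assigns d asgs =1 exec_assigns d' asgs.
Proof.
elim: asgs d d' => //= a asgs IH d d' dd'; apply: IH => k.
by rewrite /assign /upd (eq_eval _ _ _ _ dd') dd'.
Qed.

Definition par_assigns (T : finType) (tgt : T -> 'I_n) (ex : T -> expr R N n) :=
  [seq (tgt x, ex x) | x <- index_enum T].

Variables (T : finType) (tgt : T -> 'I_n) (ex : T -> expr R N n).

Lemma exec_par_assigns_frame d k :
  (forall x, tgt x != k) -> exec_assigns d (par_assigns tgt ex) k = d k.
Proof.
move=> ntgt; apply: exec_assigns_frame; rewrite -map_comp.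
by apply/mapP => -[x _ kx]; move: (ntgt x); rewrite kx eqxx.
Qed.

Hypotheses (tgt_inj : injective tgt) (ex_indep : forall x y, ~~ reads (ex x) (tgt y)).

Lemma exec_par_assigns d x :
  exec_assigns d (par_assigns tgt ex) (tgt x) = eval E Lv hv d (ex x).
Proof.
rewrite /par_assigns; move: (mem_index_enum x).
elim: (index_enum T) d => // y xs IH d; rewrite inE /=.
case: (boolP (x \in xs)) => [x_xs _ | x_xs]; first by rewrite IH // /assign /= eval_upd.
rewrite orbF => /eqP xy; rewrite xy in x_xs *.
rewrite exec_assigns_frame; first by rewrite /assign /upd eqxx.
by rewrite -map_comp (@eq_map _ _ _ tgt) // (mem_map tgt_inj).
Qed.

End ParallelAssignment.

Arguments ILoadE {R N m}. Arguments ILoadL {R N m}. Arguments ILoadH {R N m}.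
Arguments IConst {R N m}. Arguments IAdd {R N m}. Arguments IMul {R N m}.

Lemma size_index_enum (T : finType) : size (index_enum T) = #|T|.
Proof. by rewrite [index_enum T]unlock -enumT -cardT. Qed.

Section Compiler.
Variables (R : realType) (N n : nat).
Variables (E : 'I_N -> 'I_N -> R) (Lv hv : 'I_N -> R).
Local Notation instr := (instr R N (n + 3)).
Local Notation exec prog s := (exec_step prog E Lv hv s).

Lemma exec_step_cat (prog1 prog2 : seq instr) s :
  exec (prog1 ++ prog2) s = exec prog2 (exec prog1 s).
Proof. exact: foldl_cat. Qed.

Definition data (r : 'I_n) : 'I_(n + 3) := lshift 3 r.
Definition scratch (i : 'I_3) : 'I_(n + 3) := rshift n i.
Definition data_of (s : 'I_(n + 3) -> R) : 'I_n -> R := fun r => s (data r).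

Definition acc_slot : 'I_3 := @Ordinal 3 0 isT.
Definition fac1_slot : 'I_3 := @Ordinal 3 1 isT.
Definition fac2_slot : 'I_3 := @Ordinal 3 2 isT.

Definition load_atom (a : atom R N n) (i : 'I_3) : seq instr :=
  match a with
  | AReg r => [:: IConst 0 (scratch i); IAdd (data r) (scratch i) (scratch i)]
  | AE p q => [:: ILoadE p q (scratch i)]
  | AL j => [:: ILoadL j (scratch i)]
  | AH j => [:: ILoadH j (scratch i)]
  | AConst c => [:: IConst c (scratch i)]
  end.

Definition compile_monomial (uv : atom R N n * atom R N n) : seq instr :=
  load_atom uv.1 fac1_slot ++ load_atom uv.2 fac2_slot ++
  [:: IMul (scratch fac1_slot) (scratch fac2_slot) (scratch fac1_slot);
      IAdd (scratch acc_slot) (scratch fac1_slot) (scratch acc_slot)].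

Definition compile_sum (ex : expr R N n) : seq instr :=
  flatten (map compile_monomial ex).

Definition compile_assign (a : 'I_n * expr R N n) : seq instr :=
  [:: IConst 0 (scratch acc_slot)] ++ compile_sum a.2 ++
  [:: IConst 0 (scratch fac1_slot); IAdd (scratch acc_slot) (scratch fac1_slot) (data a.1)].

Definition compile (asgs : seq ('I_n * expr R N n)) : seq instr :=
  flatten (map compile_assign asgs).

Lemma data_eq r r' : (data r == data r') = (r == r').
Proof. exact/inj_eq/lshift_inj. Qed.

Lemma data_neq_scratch r i : (data r == scratch i) = false.
Proof. exact: eq_lrshift. Qed.

Lemma scratch_eq i j : (scratch i == scratch j) = (i == j).
Proof. exact/inj_eq/rshift_inj. Qed.

Lemma exec_load_atom a i s :
  exec (load_atom a i) s (scratch i) = eval_atom E Lv hv (data_of s) a /\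
  forall k, k != scratch i -> exec (load_atom a i) s k = s k.
Proof.
split; last by move=> k /negbTE nk; case: a => * /=; rewrite /upd !nk.
by case: a => * /=; rewrite /upd ?eqxx // data_neq_scratch addr0.
Qed.

Lemma exec_compile_monomial uv s :
  exec (compile_monomial uv) s (scratch acc_slot) =
    s (scratch acc_slot) + eval_atom E Lv hv (data_of s) uv.1 * eval_atom E Lv hv (data_of s) uv.2 /\
  data_of (exec (compile_monomial uv) s) =1 data_of s.
Proof.
rewrite /compile_monomial !exec_step_cat.
have [s1_fac1 s1_frame] := exec_load_atom uv.1 fac1_slot s.
set s1 := exec (load_atom uv.1 fac1_slot) s in s1_fac1 s1_frame *.
have [s2_fac2 s2_frame] := exec_load_atom uv.2 fac2_slot s1.
set s2 := exec (load_atom uv.2 fac2_slot) s1 in s2_fac2 s2_frame *.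
have s1_data : data_of s1 =1 data_of s by move=> r; rewrite /data_of s1_frame ?data_neq_scratch.
have s2_data : data_of s2 =1 data_of s.
  by move=> r; rewrite -s1_data /data_of s2_frame ?data_neq_scratch.
split.
  rewrite /= /upd eqxx !scratch_eq /= s2_frame ?scratch_eq // s1_frame ?scratch_eq //.
  by rewrite s2_frame ?scratch_eq // s1_fac1 s2_fac2 (eq_eval_atom _ _ _ _ s1_data).
by move=> r; rewrite /data_of /= /upd !data_neq_scratch; exact: s2_data.
Qed.

Lemma exec_compile_sum ex s :
  exec (compile_sum ex) s (scratch acc_slot) = s (scratch acc_slot) + eval E Lv hv (data_of s) ex /\
  data_of (exec (compile_sum ex) s) =1 data_of s.
Proof.
elim: ex s => [|uv ex IH] s; first by rewrite eval_nil addr0.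
rewrite /compile_sum /= exec_step_cat -/(compile_sum ex).
have [s1_acc s1_data] := exec_compile_monomial uv s.
have [s2_acc s2_data] := IH (exec (compile_monomial uv) s).
split; last by move=> r; rewrite s2_data s1_data.
by rewrite s2_acc s1_acc eval_cons -addrA (eq_eval _ _ _ _ s1_data).
Qed.

Lemma exec_compile_assign a s :
  data_of (exec (compile_assign a) s) =1 assign E Lv hv (data_of s) a.
Proof.
rewrite /compile_assign !exec_step_cat.
set s1 := exec [:: IConst 0 (scratch acc_slot)] s.
have s1_data : data_of s1 =1 data_of s.
  by move=> r; rewrite /data_of /s1 /= /upd data_neq_scratch.
have [s2_acc s2_data] := exec_compile_sum a.2 s1.
move=> r; rewrite /data_of /assign /= /upd data_eq data_neq_scratch eqxx scratch_eq /= addr0.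
case: eqP => _; last exact: etrans (s2_data r) (s1_data r).
by rewrite s2_acc /s1 /= /upd eqxx add0r (eq_eval _ _ _ _ s1_data).
Qed.

Lemma exec_compile asgs s :
  data_of (exec (compile asgs) s) =1 exec_assigns E Lv hv (data_of s) asgs.
Proof.
elim: asgs s => [|a asgs IH] s //=.
rewrite /compile /= exec_step_cat -/(compile asgs) => r.
rewrite IH; apply: eq_exec_assigns; exact: exec_compile_assign.
Qed.

Lemma compile_cat asgs1 asgs2 : compile (asgs1 ++ asgs2) = compile asgs1 ++ compile asgs2.
Proof. by rewrite /compile map_cat flatten_cat. Qed.

Lemma size_flatten_map (T : Type) (f : T -> seq instr) xs :
  size (flatten (map f xs)) = (\sum_(x <- xs) size (f x))%N.
Proof. by rewrite size_flatten sumnE /shape -map_comp big_map. Qed.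

Lemma size_load_atom a i : (size (load_atom a i) <= 2)%N.
Proof. by case: a. Qed.

Lemma size_compile_assign a : (size (compile_assign a) <= 6 * size a.2 + 3)%N.
Proof.
rewrite !size_cat /= addnCA leq_add2r /compile_sum size_flatten_map.
rewrite -sum1_size big_distrr leq_sum //= => -[u v] _.
by move: (size_load_atom u fac1_slot) (size_load_atom v fac2_slot); rewrite !size_cat /=; lia.
Qed.

Lemma size_compile_par (T : finType) (tgt : T -> 'I_n) ex k :
  (forall x, size (ex x) <= k)%N ->
  (size (compile (par_assigns tgt ex)) <= #|T| * (6 * k + 3))%N.
Proof.
move=> ex_le; rewrite /compile size_flatten_map big_map -size_index_enum -sum1_size big_distrl; apply: leq_sum => x _.
by apply: leq_trans (size_compile_assign _) _; rewrite /= mul1n leq_add2r leq_mul2l ex_le orbT.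
Qed.

End Compiler.

Section FilteredTrace.
Variables (R : realType) (N C : nat) (ty : 'I_N -> 'I_C) (W : 'M[R]_N) (mu : R).
Variable e : nat -> 'I_N -> 'I_N -> R.

Definition filtered_trace t a p q :=
  \sum_(1 <= s < t.+1) Wpow ty W s.-1 a (ty p) * mu ^+ s.-1 * e (t - s)%N p q.

Lemma filtered_trace0 a p q : filtered_trace 0 a p q = 0.
Proof. by rewrite /filtered_trace big_geq. Qed.

Lemma filtered_traceS t a p q :
  filtered_trace t.+1 a p q = Wavg ty W a (ty p) * e t p q +
    mu * \sum_(g < C) Ntype R ty g * Wavg ty W a g * filtered_trace t g p q.
Proof.
rewrite /filtered_trace big_ltn // big_add1 /= subSS subn0 expr0 mulr1; congr (_ + _).
rewrite mulr_sumr; under [RHS]eq_bigr do rewrite mulrA mulr_sumr.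
rewrite exchange_big; apply: eq_big_nat => s /andP[s_gt0 _].
case: s s_gt0 => [//|s] _ /=; rewrite !mulr_suml.
by apply: eq_bigr => g _; rewrite exprS; ring.
Qed.

End FilteredTrace.

Section Schedule.
Variables (R : realType) (N C : nat) (ty : 'I_N -> 'I_C) (W : 'M[R]_N) (mu : R).

(* The registers hold M_{a,pq}, a saved copy of M, the trace e_{pq} of the
   current step, the output Delta W_{pq}, and the type sums of L_j h_j. *)
Definition reg := ('I_C * 'I_N * 'I_N + 'I_C * 'I_N * 'I_N + 'I_N * 'I_N + 'I_N * 'I_N + 'I_C)%type.
Definition nreg := #|{: reg}|.

Definition filt_reg x : 'I_nreg := enum_rank (inl (inl (inl (inl x))) : reg).
Definition saved_reg x : 'I_nreg := enum_rank (inl (inl (inl (inr x))) : reg).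
Definition trace_reg pq : 'I_nreg := enum_rank (inl (inl (inr pq)) : reg).
Definition out_reg pq : 'I_nreg := enum_rank (inl (inr pq) : reg).
Definition typesum_reg a : 'I_nreg := enum_rank (inr a : reg).

Lemma rank_eq (r r' : reg) : (enum_rank r == enum_rank r') = (r == r').
Proof. exact/inj_eq/enum_rank_inj. Qed.

Lemma filt_reg_inj : injective filt_reg. Proof. by move=> x y /enum_rank_inj[]. Qed.
Lemma saved_reg_inj : injective saved_reg. Proof. by move=> x y /enum_rank_inj[]. Qed.
Lemma trace_reg_inj : injective trace_reg. Proof. by move=> x y /enum_rank_inj[]. Qed.
Lemma out_reg_inj : injective out_reg. Proof. by move=> x y /enum_rank_inj[]. Qed.
Lemma typesum_reg_inj : injective typesum_reg. Proof. by move=> x y /enum_rank_inj[]. Qed.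

Local Notation expr := (expr R N nreg).

(* M is updated from a saved copy of itself, so that the update is a parallel
   assignment. *)
Definition save : seq ('I_nreg * expr) :=
  par_assigns saved_reg (fun x => [:: (AReg (filt_reg x), AConst 1)]).

Definition propagate : seq ('I_nreg * expr) :=
  par_assigns filt_reg (fun x => let: (a, p, q) := x in
    (AConst (Wavg ty W a (ty p)), AReg (trace_reg (p, q))) ::
    [seq (AConst (mu * Ntype R ty g * Wavg ty W a g), AReg (saved_reg (g, p, q)))
    | g <- index_enum 'I_C]).

Definition load_traces : seq ('I_nreg * expr) :=
  par_assigns trace_reg (fun pq => [:: (AE pq.1 pq.2, AConst 1)]).

Definition type_sums : seq ('I_nreg * expr) :=
  par_assigns typesum_reg (fun a => [seq (AL j, AH j) | j <- index_enum 'I_N & ty j == a]).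

Definition output : seq ('I_nreg * expr) :=
  par_assigns out_reg (fun pq => (AL pq.1, AReg (trace_reg pq)) ::
    [seq (AReg (typesum_reg a), AReg (filt_reg (a, pq.1, pq.2))) | a <- index_enum 'I_C]).

Definition schedule := save ++ propagate ++ load_traces ++ type_sums ++ output.

Section Step.
Variables (E : 'I_N -> 'I_N -> R) (Lv hv : 'I_N -> R).
Local Notation exec_assigns := (exec_assigns E Lv hv).
Local Notation eval := (eval E Lv hv).

Lemma exec_save d x : exec_assigns d save (saved_reg x) = d (filt_reg x).
Proof.
rewrite exec_par_assigns ?eval_cons ?eval_nil /= ?mulr1 ?addr0 //.
  exact: saved_reg_inj.
by move=> y z; rewrite /reads /= rank_eq.
Qed.

Lemma exec_propagate d a p q :
  exec_assigns d propagate (filt_reg (a, p, q)) = Wavg ty W a (ty p) * d (trace_reg (p, q)) +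
    mu * \sum_(g < C) Ntype R ty g * Wavg ty W a g * d (saved_reg (g, p, q)).
Proof.
rewrite exec_par_assigns; first last.
- move=> [[? ?] ?] y; rewrite /reads /= rank_eq has_map.
  by apply/hasPn => g _ /=; rewrite rank_eq.
- exact: filt_reg_inj.
rewrite eval_cons /= /eval big_map mulr_sumr.
by congr (_ + _); apply: eq_bigr => g _; rewrite /= !mulrA.
Qed.

Lemma exec_load_traces d p q : exec_assigns d load_traces (trace_reg (p, q)) = E p q.
Proof.
rewrite exec_par_assigns ?eval_cons ?eval_nil /= ?mulr1 ?addr0 //.
exact: trace_reg_inj.
Qed.

Lemma exec_type_sums d a :
  exec_assigns d type_sums (typesum_reg a) = \sum_(j | ty j == a) Lv j * hv j.
Proof.
rewrite exec_par_assigns; first by rewrite /eval big_map big_filter.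
- exact: typesum_reg_inj.
by move=> ? ?; rewrite /reads has_map; apply/hasPn.
Qed.

Lemma exec_output d p q :
  exec_assigns d output (out_reg (p, q)) =
    Lv p * d (trace_reg (p, q)) + \sum_(a < C) d (typesum_reg a) * d (filt_reg (a, p, q)).
Proof.
rewrite exec_par_assigns; first by rewrite eval_cons /eval big_map.
- exact: out_reg_inj.
move=> ? y; rewrite /reads /= rank_eq has_map.
by apply/hasPn => a _ /=; rewrite !rank_eq.
Qed.

Local Ltac frame := rewrite exec_par_assigns_frame; last by move=> ?; rewrite rank_eq.

Lemma exec_schedule d :
  let d' := exec_assigns d schedule in
  [/\ forall a p q, d' (filt_reg (a, p, q)) = Wavg ty W a (ty p) * d (trace_reg (p, q)) +
        mu * \sum_(g < C) Ntype R ty g * Wavg ty W a g * d (filt_reg (g, p, q)),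
      forall p q, d' (trace_reg (p, q)) = E p q &
      forall p q, d' (out_reg (p, q)) = Lv p * E p q +
        \sum_(a < C) (\sum_(j | ty j == a) Lv j * hv j) * d' (filt_reg (a, p, q))].
Proof.
rewrite /schedule !exec_assigns_cat.
set d1 := exec_assigns d save; set d2 := exec_assigns d1 propagate.
set d3 := exec_assigns d2 load_traces; set d4 := exec_assigns d3 type_sums.
have filt4 x : d4 (filt_reg x) = d2 (filt_reg x) by rewrite /d4 /d3; do 2!frame.
have trace4 pq : d4 (trace_reg pq) = E pq.1 pq.2.
  by case: pq => p q; rewrite /d4; frame; exact: exec_load_traces.
split=> [a p q | p q | p q]; do ?[frame]; rewrite ?filt4 ?trace4 //.
  rewrite /d2 exec_propagate /d1; frame; congr (_ + _ * _).
  by apply: eq_bigr => g _; rewrite exec_save.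
rewrite exec_output trace4; congr (_ + _); apply: eq_bigr => a _.
by frame; rewrite /d4 exec_type_sums.
Qed.

End Step.

Definition modprop_prog := compile schedule.

Lemma nreg_eq : nreg = (2 * C * N ^ 2 + 2 * N ^ 2 + C)%N.
Proof. rewrite /nreg !card_sum !card_prod !card_ord; ring. Qed.

Lemma size_modprop_prog :
  (0 < N)%N -> (0 < C)%N -> (size modprop_prog <= 57 * C ^ 2 * N ^ 2)%N.
Proof.
move=> N_gt0 C_gt0.
rewrite /modprop_prog /schedule !compile_cat !size_cat.
apply: leq_trans (leq_add (size_compile_par (k := 1) _ _)
  (leq_add (size_compile_par (k := C.+1) _ _) (leq_add (size_compile_par (k := 1) _ _)
  (leq_add (size_compile_par (k := N) _ _) (size_compile_par (k := C.+1) _ _))))) _ => //.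
- by case=> [[a p] q]; rewrite /= size_map size_index_enum card_ord.
- move=> a; rewrite size_map size_filter -[X in (_ <= X)%N]card_ord -size_index_enum.
  exact: count_size.
- by move=> pq; rewrite /= size_map size_index_enum card_ord.
rewrite !card_prod !card_ord.
nia.
Qed.

Variables (e : nat -> 'I_N -> 'I_N -> R) (L h : nat -> 'I_N -> R).

Definition registers_hold t (s : 'I_(nreg + 3) -> R) :=
  [/\ forall a p q, data_of s (filt_reg (a, p, q)) = filtered_trace ty W mu e t a p q,
      forall p q, data_of s (trace_reg (p, q)) = e t p q &
      forall p q, data_of s (out_reg (p, q)) = modprop ty W mu e L h t p q].

Lemma exec_modprop_prog t s :
  (forall a p q, Wavg ty W a (ty p) * data_of s (trace_reg (p, q)) +
     mu * \sum_(g < C) Ntype R ty g * Wavg ty W a g * data_of s (filt_reg (g, p, q)) =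
   filtered_trace ty W mu e t a p q) ->
  registers_hold t (exec_step modprop_prog (e t) (L t) (h t) s).
Proof.
move=> filt_next; have [filt' trace' out'] := exec_schedule (e t) (L t) (h t) (data_of s).
split=> [a p q | p q | p q]; rewrite exec_compile ?filt' ?trace' ?filt_next //.
rewrite out'; congr (_ + _); apply: eq_bigr => a _.
by rewrite filt' filt_next.
Qed.

Lemma run_modprop_prog t : registers_hold t (run modprop_prog (fun _ => 0) e L h t).
Proof.
elim: t => [|t [filt_t trace_t _]] /=; apply: exec_modprop_prog => a p q.
  rewrite /data_of big1 => [|g _]; last by rewrite mulr0.
  by rewrite filtered_trace0 !mulr0 addr0.
rewrite trace_t filtered_traceS; congr (_ + _ * _).
by apply: eq_bigr => g _; rewrite filt_t.
Qed.

End Schedule.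

Theorem proposition1 :
  exists K : nat,
  forall (R : realType) (N C : nat) (ty : 'I_N -> 'I_C),
    (forall a : 'I_C, exists j : 'I_N, ty j = a) ->
  forall (W : 'M[R]_N) (mu : R),
  exists (m : nat) (prog : seq (instr R N m)) (s0 : 'I_m -> R)
         (out : 'I_N -> 'I_N -> 'I_m),
    (m <= K * C * N ^ 2)%N /\
    (size prog <= K * C ^ 2 * N ^ 2)%N /\
    forall (e : nat -> 'I_N -> 'I_N -> R) (L h : nat -> 'I_N -> R) (t : nat),
      (1 <= t)%N ->
      forall p q : 'I_N,
        run prog s0 e L h t (out p q) = modprop ty W mu e L h t p q.
Proof.
exists 57 => R N C ty _ W mu.
case: N ty W => [|n] ty W.
  by exists 0, [::], (fun _ => 0), (fun p _ => p); split; [|split] => // e L h t _ [].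
have C_gt0 : (0 < C)%N := leq_ltn_trans (leq0n _) (ltn_ord (ty ord0)).
exists (nreg n.+1 C + 3), (modprop_prog ty W mu), (fun _ => 0), (fun p q => data (@out_reg n.+1 C (p, q))).
split; [|split].
- by rewrite nreg_eq; nia.
- exact: size_modprop_prog.
by move=> e L h t _ p q; have [_ _] := run_modprop_prog ty W mu e L h t; apply.
Qed.
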